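(* Let $G$ be a group and $\mathcal{S}$ a 2-complex with vertices in $G$ such that $\mathcal{C}=Sc[\mathcal{S},G]$ is a commutative triplet structure. Then for every $g\in G$ the link of $g$ in $\mathcal{C}$ is isomorphic to the graph $G_{link}$ with vertex set $\{xy^{-1}:\{x,y\}\in\mathcal{T}\}$ in which $ac^{-1}\sim bc^{-1}$ for every triangle $\{a,b,c\}$ of $\mathcal{S}$ (for every labelling of its vertices).
   Context: For $\sigma\subseteq G$, $\sigma\cdot g=\{sg:s\in\sigma\}$; $Sc[\mathcal{S},G]=\{\sigma\cdot g:\sigma\in\mathcal{S},g\in G\}$. The link of a vertex $v$ of $\mathcal{C}$ is the graph with edge set $\{\sigma\setminus\{v\}:\sigma \text{ a triangle of }\mathcal{C},\ v\in\sigma\}$. $\mathcal{T}=\mathcal{S}(1)$ (2-sets contained in triangles of $\mathcal{S}$), $\mathcal{T}_o$ = ordered pairs $(t_1,t_2)$ with $\{t_1,t_2\}\in\mathcal{T}$. Commutative triplet structure: (0) $\{s,s^{-1}\}\notin\mathcal{T}$ for every vertex $s$; (A) every edge of $\mathcal{T}$ lies in exactly $\tilde d$ triangles of $\mathcal{S}$; (B) $ab=ba$ for $\{a,b\}\in\mathcal{T}$; (C) $\{a,b\}\in\mathcal{T}\iff\{a^{-1},b^{-1}\}\in\mathcal{T}$; (D) for $t\ne t'\in\mathcal{T}_o$, $t_1t_2^{-1}=t'_1(t'_2)^{-1}$ implies $t'_2=t_1^{-1}$, $t'_1=t_2^{-1}$; (E) the 1-skeleton of $\mathcal{S}$ is connected.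 *)

(* An abstract (possibly infinite) group is given by its
   carrier type, operations and the group axioms; sets are predicates. *)
From Stdlib Require Import List Relations.
Set Implicit Arguments.

Section Defs.
Variable T : Type.
Variables (mul : T -> T -> T) (one : T) (inv : T -> T).

Record is_group : Prop := {
  mulA : forall x y z, mul x (mul y z) = mul (mul x y) z;
  mul1g : forall x, mul one x = x;
  mulg1 : forall x, mul x one = x;
  mulVg : forall x, mul (inv x) x = one;
  mulgV : forall x, mul x (inv x) = one }.

Definition family := (T -> Prop) -> Prop.

Definition is3set (sigma : T -> Prop) (a b c : T) : Prop :=
  a <> b /\ a <> c /\ b <> c /\ forall x, sigma x <-> (x = a \/ x = b \/ x = c).

(* every member of S is a triangle (3-element set): S is a 2-complex
   given by its triangles *)
Definition two_complex (S : family) : Prop :=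
  forall sigma, S sigma -> exists a b c, is3set sigma a b c.

(* {a,b,c} is a triangle of F (any labelling, sets up to extensionality) *)
Definition is_tri (F : family) (a b c : T) : Prop :=
  exists sigma, F sigma /\ is3set sigma a b c.

Definition rtrans (sigma : T -> Prop) (g : T) : T -> Prop :=
  fun x => exists s, sigma s /\ x = mul s g.

Definition Sc (S : family) : family :=
  fun tau => exists sigma g, S sigma /\ forall x, tau x <-> rtrans sigma g x.

(* {a,b} in T = S(1): 2-sets contained in triangles of S *)
Definition edgeT (S : family) (a b : T) : Prop :=
  a <> b /\ exists c, is_tri S a b c.

Definition vertS (S : family) (v : T) : Prop := exists sigma, S sigma /\ sigma v.

Definition comm_triplet_structure (S : family) : Prop :=
  (forall s, ~ edgeT S s (inv s)) /\
  (exists dt : nat, forall a b, edgeT S a b ->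
               exists l : list T, NoDup l /\ length l = dt /\
                 forall c, In c l <-> is_tri S a b c) /\
  (forall a b, edgeT S a b -> mul a b = mul b a) /\
  (forall a b, edgeT S a b <-> edgeT S (inv a) (inv b)) /\
  (forall t1 t2 t1' t2', edgeT S t1 t2 -> edgeT S t1' t2' ->
               (t1, t2) <> (t1', t2') ->
               mul t1 (inv t2) = mul t1' (inv t2') ->
               t2' = inv t1 /\ t1' = inv t2) /\
  (forall u v, vertS S u -> vertS S v -> clos_refl_trans T (edgeT S) u v).

(* link of g in a complex C: edges sigma \ {g} for triangles sigma containing g;
   vertices = endpoints of these edges *)
Definition link_edge (C : family) (g x y : T) : Prop := is_tri C g x y.
Definition link_vert (C : family) (g x : T) : Prop := exists y, link_edge C g x y.

Definition Glink_vert (S : family) (v : T) : Prop :=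
  exists x y, edgeT S x y /\ v = mul x (inv y).
Definition Glink_edge (S : family) (u v : T) : Prop :=
  exists a b c, is_tri S a b c /\ u = mul a (inv c) /\ v = mul b (inv c).

End Defs.

Definition graph_iso {T1 T2 : Type} (V1 : T1 -> Prop) (E1 : T1 -> T1 -> Prop)
  (V2 : T2 -> Prop) (E2 : T2 -> T2 -> Prop) (f : T1 -> T2) : Prop :=
  (forall x, V1 x -> V2 (f x)) /\
  (forall x y, V1 x -> V1 y -> f x = f y -> x = y) /\
  (forall z, V2 z -> exists x, V1 x /\ f x = z) /\
  (forall x y, V1 x -> V1 y -> (E1 x y <-> E2 (f x) (f y))).

(* Right multiplication by g^-1 carries the link of g in Sc[S,G] onto G_link:
   a translate sigma.h contains g exactly when g = c h for some c in sigma,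
   i.e. h = c^-1 g, and its two other vertices a h, b h are then sent to
   a c^-1 and b c^-1. *)
From Stdlib Require Import List Relations.
Set Implicit Arguments.

Lemma graph_iso_of_cancel (T1 T2 : Type) (V1 : T1 -> Prop) (E1 : T1 -> T1 -> Prop)
  (V2 : T2 -> Prop) (E2 : T2 -> T2 -> Prop) (f : T1 -> T2) (f' : T2 -> T1) :
  (forall x, f' (f x) = x) -> (forall z, f (f' z) = z) ->
  (forall x, V1 x <-> V2 (f x)) ->
  (forall x y, E1 x y <-> E2 (f x) (f y)) ->
  graph_iso V1 E1 V2 E2 f.
Proof.
intros fK f'K HV HE; split; [|split; [|split]].
- intros x; apply HV.
- intros x y _ _ Exy; rewrite <- (fK x), <- (fK y), Exy; reflexivity.
- intros z Vz; exists (f' z); rewrite HV, f'K; auto.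
- intros x y _ _; apply HE.
Qed.

Section Is3set.
Variable T : Type.

Lemma is3set_ext (s s' : T -> Prop) a b c :
  (forall x, s x <-> s' x) -> is3set s a b c -> is3set s' a b c.
Proof.
intros Hss' [dab [dac [dbc Hs]]]; split; [|split; [|split]]; auto.
intros x; rewrite <- Hss'; apply Hs.
Qed.

Lemma is3set_swapl (s : T -> Prop) a b c : is3set s a b c -> is3set s b a c.
Proof.
intros [dab [dac [dbc Hs]]]; split; [|split; [|split]]; auto.
intros x; rewrite Hs; tauto.
Qed.

Lemma is3set_swapr (s : T -> Prop) a b c : is3set s a b c -> is3set s a c b.
Proof.
intros [dab [dac [dbc Hs]]]; split; [|split; [|split]]; auto.
intros x; rewrite Hs; tauto.
Qed.

Lemma is_tri_swapl (F : family T) a b c : is_tri F a b c -> is_tri F b a c.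
Proof. intros [s [Fs Hs]]; exists s; split; [exact Fs | apply is3set_swapl, Hs]. Qed.

Lemma is_tri_swapr (F : family T) a b c : is_tri F a b c -> is_tri F a c b.
Proof. intros [s [Fs Hs]]; exists s; split; [exact Fs | apply is3set_swapr, Hs]. Qed.

End Is3set.

Section Glink.
Variable T : Type.
Variables (mul : T -> T -> T) (inv : T -> T) (S : family T).

Lemma Glink_edge_vertl u v : Glink_edge mul inv S u v -> Glink_vert mul inv S u.
Proof.
intros [a [b [c [Habc [-> _]]]]]; exists a, c; split; [|reflexivity].
split; [|exists b; apply is_tri_swapr, Habc].
intros <-; destruct Habc as [s [_ [_ [dac _]]]]; apply dac; reflexivity.
Qed.

Lemma Glink_vert_edge u : Glink_vert mul inv S u -> exists v, Glink_edge mul inv S u v.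
Proof.
intros [x [y [[_ [c Hxyc]] ->]]]; exists (mul c (inv y)), x, c, y.
split; [apply is_tri_swapr, Hxyc | auto].
Qed.

End Glink.

Section RightTranslates.
Variable T : Type.
Variables (mul : T -> T -> T) (one : T) (inv : T -> T).
Hypothesis HG : is_group mul one inv.

Lemma mulgK h x : mul (mul x h) (inv h) = x.
Proof. rewrite <- (mulA HG), (mulgV HG), (mulg1 HG); reflexivity. Qed.

Lemma mulgKV h x : mul (mul x (inv h)) h = x.
Proof. rewrite <- (mulA HG), (mulVg HG), (mulg1 HG); reflexivity. Qed.

Lemma mulKg c x : mul (inv c) (mul c x) = x.
Proof. rewrite (mulA HG), (mulVg HG), (mul1g HG); reflexivity. Qed.

Lemma mulKVg c x : mul c (mul (inv c) x) = x.
Proof. rewrite (mulA HG), (mulgV HG), (mul1g HG); reflexivity. Qed.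

Lemma divg_mul2r h a c : mul (mul a h) (inv (mul c h)) = mul a (inv c).
Proof.
assert (Eah : mul a h = mul (mul a (inv c)) (mul c h)).
{ rewrite <- (mulA HG), mulKg; reflexivity. }
rewrite Eah; apply mulgK.
Qed.

Lemma mulg_of_divg_eq g c x a :
  mul x (inv g) = mul a (inv c) -> x = mul a (mul (inv c) g).
Proof. intros E; rewrite (mulA HG), <- E; symmetry; apply mulgKV. Qed.

Lemma mulIg h x y : mul x h = mul y h -> x = y.
Proof. intros E; rewrite <- (mulgK h x), <- (mulgK h y), E; reflexivity. Qed.

Lemma rtransK (sigma : T -> Prop) h x :
  rtrans mul (rtrans mul sigma h) (inv h) x <-> sigma x.
Proof.
split.
- intros [y [[s [Hs ->]] ->]]; rewrite mulgK; exact Hs.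
- intros Hx; exists (mul x h); split; [exists x; auto | symmetry; apply mulgK].
Qed.

Lemma is3set_rtrans (sigma : T -> Prop) h a b c : is3set sigma a b c ->
  is3set (rtrans mul sigma h) (mul a h) (mul b h) (mul c h).
Proof.
intros [dab [dac [dbc Hs]]]; repeat split; try (intros E; apply mulIg in E; auto).
- intros [s [Hs' ->]]; apply Hs in Hs' as [-> | [-> | ->]]; auto.
- intros [-> | [-> | ->]]; eexists; split; try reflexivity; apply Hs; auto.
Qed.

Lemma is_tri_Sc_rtrans (S : family T) h a b c :
  is_tri S a b c -> is_tri (Sc mul S) (mul a h) (mul b h) (mul c h).
Proof.
intros [sigma [Ssigma Hsigma]]; exists (rtrans mul sigma h); split.
- exists sigma, h; split; [exact Ssigma | tauto].
- apply is3set_rtrans, Hsigma.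
Qed.

Lemma is_tri_ScP (S : family T) x y z : is_tri (Sc mul S) x y z ->
  exists h a b c, is_tri S a b c /\ x = mul a h /\ y = mul b h /\ z = mul c h.
Proof.
intros [tau [[sigma [h [Ssigma Htau]]] Hxyz]].
exists h, (mul x (inv h)), (mul y (inv h)), (mul z (inv h)).
repeat split; try (symmetry; apply mulgKV).
exists sigma; split; [exact Ssigma|].
apply is3set_ext with (rtrans mul (rtrans mul sigma h) (inv h)); [apply rtransK|].
apply is3set_rtrans, is3set_ext with tau; assumption.
Qed.

Lemma link_edge_Sc (S : family T) g x y :
  link_edge (Sc mul S) g x y <-> Glink_edge mul inv S (mul x (inv g)) (mul y (inv g)).
Proof.
split.
- intros Hgxy; apply is_tri_ScP in Hgxy as [h [c [a [b [Hcab [-> [-> ->]]]]]]].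
  exists a, b, c; rewrite !divg_mul2r.
  split; [apply is_tri_swapr, is_tri_swapl, Hcab | auto].
- intros [a [b [c [Habc [Ex Ey]]]]].
  unfold link_edge; rewrite <- (mulKVg c g) at 1.
  rewrite (mulg_of_divg_eq Ex), (mulg_of_divg_eq Ey).
  apply is_tri_Sc_rtrans, is_tri_swapl, is_tri_swapr, Habc.
Qed.

Lemma link_vert_Sc (S : family T) g x :
  link_vert (Sc mul S) g x <-> Glink_vert mul inv S (mul x (inv g)).
Proof.
split.
- intros [y Hxy]; apply link_edge_Sc in Hxy; exact (Glink_edge_vertl Hxy).
- intros Hx; destruct (Glink_vert_edge Hx) as [w Hw].
  exists (mul w g); apply link_edge_Sc; rewrite mulgK; exact Hw.
Qed.

End RightTranslates.

Theorem mainTheorem8 (T : Type) (mul : T -> T -> T) (one : T) (inv : T -> T)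
  (HG : is_group mul one inv) (S : family T)
  (HS : two_complex S)
  (Hcts : comm_triplet_structure mul inv S) :
  forall g : T, exists f : T -> T,
    graph_iso (link_vert (Sc mul S) g) (link_edge (Sc mul S) g)
              (Glink_vert mul inv S) (Glink_edge mul inv S) f.
Proof.
intros g; exists (fun x => mul x (inv g)).
apply graph_iso_of_cancel with (fun z => mul z g).
- apply (mulgKV HG).
- apply (mulgK HG).
- apply (link_vert_Sc HG).
- apply (link_edge_Sc HG).
Qed.
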